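(* Let $G=(V,E)$ be a 3-connected, transient, simple planar graph with bounded vertex degree and locally finite dual that is circle packed in $\mathbb{H}^2$, and let $\mathcal{A}$ be a nonempty proper closed subset of $\partial\mathbb{H}^2$. If $f\in\mathbf{HD}(G)$ and $f\in\mathcal{R}_{\mathcal{A}}$, then for almost every singly infinite path $(\gamma(n))_{n\ge0}$ with $\lim_{n\to\infty}d_m(\gamma(n),z)=0$ for some $z\in\mathcal A$, we have $\lim_{n\to\infty}f(\gamma(n))=0$.
   Context: Circle packing: vertices are the Euclidean centers of circles of a packing of the unit disk with tangency graph $G$, $r_v$ the radius; $m(e)=r_u+r_v$; $d_m$ its path metric; topological notions near $\partial\mathbb{H}^2$ with respect to $d_m$ (in its completion). Conductances $C:E\to(0,\infty)$. A function $F$ is harmonic if $F(v)=\sum_{e=(v,w)}C(e)F(w)/\sum_{e\ni v}C(e)$, Dirichlet if $\sum_{e=(u,v)}C(e)(F(u)-F(v))^2<\infty$; $\mathbf D(G)$, $\mathbf{HD}(G)$ are the Dirichlet and harmonic Dirichlet functions. With the norm $\|u\|=\sqrt{\mathcal E(\nabla u)+u(b_0)^2}$ ($b_0$ a fixed vertex), $\mathcal R_{\mathcal A}=\mathbf{HD}(G)\cap\overline{\mathcal T}$ where $\overline{\mathcal T}$ is the closure of the set of $f\in\mathbf D(G)$ such that every $z\in\mathcal A$ has an open neighborhood $U_z$ with $\mathrm{supp}f\cap U_z=\emptyset$. A family of paths is null if some $q:E\to(0,\infty)$ with $\sum_eC(e)q(e)^2<\infty$ gives each of its paths infinite $q$-length;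 ''almost every path'' means outside a null subfamily. *)

From HB Require Import structures.
From mathcomp Require Import all_boot all_order all_algebra.
From mathcomp Require Import all_classical all_reals all_analysis.
Set Implicit Arguments. Unset Strict Implicit. Unset Printing Implicit Defensive.
Import Order.TTheory GRing.Theory Num.Theory.
Import numFieldNormedType.Exports.
Local Open Scope classical_set_scope.
Local Open Scope ring_scope.

Section Defs.
Variable R : realType.
Variable V : countType.

Definition eucl_dist (p q : R * R) : R :=
  Num.sqrt ((p.1 - q.1) ^+ 2 + (p.2 - q.2) ^+ 2).

Definition origin : R * R := (0, 0).
(** the open unit disk (= H^2) and the unit circle (= boundary of H^2) *)
Definition unit_disk : set (R * R) := [set p | eucl_dist p origin < 1].
Definition unit_circle : set (R * R) := [set p | eucl_dist p origin = 1].

Variable nb : V -> seq V.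
Definition adj : rel V := fun u v => v \in nb u.
Definition edges : set (V * V) := [set p | adj p.1 p.2].

Variables (c : V -> R * R) (r : V -> R).
Definition disk (v : V) : set (R * R) := [set p | eucl_dist p (c v) <= r v].
Definition disks_union : set (R * R) := \bigcup_(v in [set: V]) disk v.

Definition circle_packing : Prop :=
  [/\ (forall v, 0 < r v),
      (forall v, eucl_dist (c v) origin + r v < 1),
      (forall u v, u != v -> r u + r v <= eucl_dist (c u) (c v)),
      (forall u v, adj u v <-> (u != v /\ eucl_dist (c u) (c v) = r u + r v)) &
      (forall u, uniq (nb u))].

Definition interstice (K : set (R * R)) : Prop :=
  exists2 x, (unit_disk `\` disks_union) x &
    K = connected_component (unit_disk `\` disks_union) x.

(** The packing fills the unit disk (carrier = H^2): it is locally finite in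
    the disk and every interstice is relatively compact in the disk. *)
Definition packed_in_H2 : Prop :=
  circle_packing /\
  (forall rho : R, rho < 1 ->
     finite_set [set v | exists p, eucl_dist p origin <= rho /\ disk v p]) /\
  (forall K, interstice K -> closure K `<=` unit_disk).

(** locally finite dual: every face (interstice) is bounded by finitely many
    circles *)
Definition locally_finite_dual : Prop :=
  forall K, interstice K -> finite_set [set v | closure K `&` disk v !=set0].

Definition bounded_degree : Prop := exists D : nat, forall v, (size (nb v) <= D)%N.

Definition avoids (a b : V) (u : V) (p : seq V) : Prop :=
  all (fun x => (x != a) && (x != b)) (u :: p).

Definition three_connected : Prop :=
  forall a b u v, u != a -> u != b -> v != a -> v != b ->
    exists p : seq V, [/\ path adj u p, last u p = v & avoids a b u p].

Variable C : V -> V -> R.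
Definition conductances : Prop :=
  forall u v, adj u v -> 0 < C u v /\ C u v = C v u.

Definition piC (v : V) : R := \sum_(w <- nb v) C v w.

Fixpoint pstep (n : nat) (v w : V) : R :=
  match n with
  | 0 => if v == w then 1 else 0
  | n'.+1 => \sum_(u <- nb v) (C v u / piC v) * pstep n' u w
  end.

(** transient: the Green function (expected number of visits) is finite *)
Definition transient : Prop :=
  forall v, (\sum_(n <oo) (pstep n v v)%:E < +oo)%E.

Definition net_harmonic (F : V -> R) : Prop :=
  forall v, F v = (\sum_(w <- nb v) C v w * F w) / (\sum_(w <- nb v) C v w).

(** Dirichlet energy: sum over undirected edges (= half the sum over ordered
    adjacent pairs). *)
Definition energy (F : V -> R) : \bar R :=
  ((2^-1)%:E * \esum_(p in edges) (C p.1 p.2 * (F p.1 - F p.2) ^+ 2)%:E)%E.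

Definition dirichlet (F : V -> R) : Prop := (energy F < +oo)%E.

(** the edge metric m(e) = r_u + r_v and its path metric d_m *)
Fixpoint wlen (x : V) (p : seq V) : R :=
  match p with
  | [::] => 0
  | y :: p' => r x + r y + wlen y p'
  end.

Definition dm (u v : V) : R :=
  inf [set l | exists p : seq V, [/\ path adj u p, last u p = v & l = wlen u p]].

Definition dm_cauchy (s : nat -> V) : Prop :=
  forall eps : R, 0 < eps -> exists N, forall n m, (N <= n)%N -> (N <= m)%N ->
    dm (s n) (s m) < eps.

Definition econv (s : nat -> R * R) (z : R * R) : Prop :=
  forall eps : R, 0 < eps -> exists N, forall n, (N <= n)%N -> eucl_dist (s n) z < eps.

(** [s] converges in the d_m-completion to a point lying over [z]:
    it is d_m-Cauchy and the circle centres converge to [z]. *)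
Definition dm_conv_to (s : nat -> V) (z : R * R) : Prop :=
  dm_cauchy s /\ econv (fun n => c (s n)) z.

(** T: Dirichlet functions whose support avoids a d_m-neighbourhood (in the
    completion) of every point of A. *)
Definition in_T (A : set (R * R)) (F : V -> R) : Prop :=
  dirichlet F /\
  forall z, A z -> forall s : nat -> V, dm_conv_to s z ->
    exists2 eps : R, 0 < eps & exists N, forall n, (N <= n)%N ->
      forall v, F v != 0 -> eps <= dm v (s n).

(** closure of T for the norm ||u||^2 = E(grad u) + u(b0)^2 *)
Definition in_closure_T (b0 : V) (A : set (R * R)) (F : V -> R) : Prop :=
  forall eps : R, 0 < eps -> exists2 g, in_T A g &
    (energy (fun v => (F v - g v)%R) + ((F b0 - g b0) ^+ 2)%:E < (eps ^+ 2)%:E)%E.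

Definition graph_path (g : nat -> V) : Prop := forall n, adj (g n) (g n.+1).

Definition null_family (P : set (nat -> V)) : Prop :=
  exists q : V -> V -> R,
    [/\ (forall u v, adj u v -> 0 < q u v),
        (forall u v, q u v = q v u),
        (\esum_(p in edges) (C p.1 p.2 * q p.1 p.2 ^+ 2)%:E < +oo)%E &
        (forall g, P g -> \sum_(n <oo) (q (g n) (g n.+1))%:E = +oo)%E].

End Defs.

From HB Require Import structures.
From mathcomp Require Import all_boot all_order all_algebra.
From mathcomp Require Import all_classical all_reals all_analysis.
From mathcomp.algebra_tactics Require Import lra.
Import Order.TTheory GRing.Theory Num.Theory.
Import numFieldNormedType.Exports.
Set Implicit Arguments. Unset Strict Implicit. Unset Printing Implicit Defensive.
Local Open Scope classical_set_scope.
Local Open Scope ring_scope.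

(* Approximate f in the Dirichlet norm by g_k in T with ||f - g_k|| < 4^-k and
   put F_k = 2^k (f - g_k). The energies of the F_k are summable, so
   q = sqrt (sum_k |dF_k|^2 + W / C), for a small positive summable weight W,
   is a metric of finite energy that dominates every |dF_k|. Along a path
   tending to a point of A every g_k eventually vanishes, so F_k = 2^k f there.
   If f does not tend to 0 along the path, the values F_k on it are unbounded
   while F_k(b0) stays bounded, and telescoping along the path (joined to b0)
   forces its q-length to be infinite. *)

Lemma nneseries_geometric_lt_pinfty (R : realType) (a x : R) :
  0 <= a -> 0 < x -> x < 1 -> (\sum_(k <oo) (a * x ^+ k)%:E < +oo)%E.
Proof.
move=> a_ge0 x_gt0 x_lt1.
have axk_ge0 k : (0 <= (a * x ^+ k)%:E)%E by rewrite lee_fin mulr_ge0 // exprn_ge0 // ltW.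
apply: (@le_lt_trans _ _ (a / (1 - x))%:E); last exact: ltry.
apply: lime_le (is_cvg_nneseries_cond (fun n _ _ => axk_ge0 n)) _.
apply: nearW => n /=; rewrite sumEFin lee_fin.
by apply: geometric_le_lim => //; rewrite gtr0_norm.
Qed.

Section esum_facts.
Variables (R : realType) (T : choiceType) (I : set T).
Local Open Scope ereal_scope.

Lemma esumZl (c : R) (a : T -> \bar R) : (0 <= c)%R -> (forall i, I i -> 0 <= a i) ->
  \esum_(i in I) (c%:E * a i) = c%:E * \esum_(i in I) a i.
Proof.
gen have le_esumZl : c a / (0 <= c)%R -> (forall i, I i -> 0 <= a i) ->
    \esum_(i in I) (c%:E * a i) <= c%:E * \esum_(i in I) a i.
  move=> c_ge0 a_ge0; apply: ge_ereal_sup => _ [X [finX XI] <-] /=.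
  rewrite fsbig_finite //= big_seq -ge0_sume_distrr; last first.
    by move=> i; rewrite in_fset_set // inE => /XI /a_ge0.
  rewrite -big_seq -fsbig_finite //; apply: lee_wpmul2l; first by rewrite lee_fin.
  by apply: ereal_sup_ubound; exists X.
move=> c_ge0 a_ge0; apply/eqP; rewrite eq_le le_esumZl //=.
have [->|c_neq0] := eqVneq c 0%R.
  by rewrite mul0e esum_ge0 // => i _; rewrite mul0e.
have cV_ge0 : (0 <= c^-1)%R by rewrite invr_ge0.
have ca_ge0 i : I i -> 0 <= c%:E * a i by move=> Ii; rewrite mule_ge0 // a_ge0.
rewrite (eq_esum (b := fun i => c^-1%:E * (c%:E * a i))); last first.
  by move=> i _; rewrite muleA -EFinM mulVf // mul1e.
apply: le_trans (lee_wpmul2l _ (le_esumZl _ _ cV_ge0 ca_ge0)) _; first by rewrite lee_fin.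
by rewrite muleA -EFinM divff // mul1e.
Qed.

Lemma esum_nneseries (t : T -> nat -> \bar R) : (forall i k, I i -> 0 <= t i k) ->
  \esum_(i in I) \sum_(k <oo) t i k = \sum_(k <oo) \esum_(i in I) t i k.
Proof.
move=> t_ge0.
rewrite nneseries_esumT; last by move=> k; apply: esum_ge0 => i Ii; exact: t_ge0.
rewrite (eq_esum (b := fun i => \esum_(k in [set: nat]) t i k)); last first.
  by move=> i Ii; rewrite nneseries_esumT // => k; exact: t_ge0.
rewrite !esum_esum //; last by move=> i k Ii _; exact: t_ge0.
rewrite (reindex_esum ([set: nat] `*`` (fun=> I)) _ (fun x => (x.2, x.1))) //.
split => /=.
- by move=> [k i] [/= _ Ii]; split.
- by move=> [k1 i1] [k2 i2] /= _ _ [-> ->].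
- by move=> [i k] [/= Ii _]; exists (k, i).
- by move=> k i _ Ii; exact: t_ge0.
Qed.

Lemma esum_fin_num_term (a : T -> \bar R) i : (forall j, I j -> 0 <= a j) ->
  \esum_(j in I) a j < +oo -> I i -> a i \is a fin_num.
Proof.
move=> a_ge0 a_fin Ii; rewrite ge0_fin_numE ?a_ge0 //.
apply: le_lt_trans a_fin; apply: esum_ge; exists [set i]; last by rewrite fsbig_set1.
by split; [exact: finite_set1 | move=> _ ->].
Qed.

Lemma esum_geometric_inj_lt_pinfty (x : R) (f : T -> nat) :
  (0 < x)%R -> (x < 1)%R -> injective f -> \esum_(i in I) (x ^+ f i)%:E < +oo.
Proof.
move=> x_gt0 x_lt1 f_inj.
have xk_ge0 k : 0 <= (x ^+ k)%:E by rewrite lee_fin exprn_ge0 // ltW.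
rewrite -(esum_image I f (fun k => (x ^+ k)%:E)); last by move=> ? ? _ _ /f_inj.
apply: (@le_lt_trans _ _ (\esum_(k in [set: nat]) (x ^+ k)%:E)).
  by rewrite esum_mkcond; apply: le_esum => k _; case: ifP.
rewrite -nneseries_esumT //.
under eq_eseriesr do rewrite -[(x ^+ _)%R]mul1r.
exact: nneseries_geometric_lt_pinfty.
Qed.

End esum_facts.

Lemma exists_summable_sym_weight (R : realType) (T : countType) (I : set (T * T)) :
  exists W : T * T -> R, [/\ forall p, 0 < W p, forall x y, W (x, y) = W (y, x) &
    (\esum_(p in I) (W p)%:E < +oo)%E].
Proof.
pose w (p : T * T) : R := 2^-1 ^+ pickle p.
have half_gt0 : (0 : R) < 2^-1 by rewrite invr_gt0.
have half_lt1 : (2^-1 : R) < 1 by rewrite invf_lt1 // ltr1n.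
have w_ge0 p : (0 <= (w p)%:E)%E by rewrite lee_fin exprn_ge0 // ltW.
exists (fun p => w p + w (p.2, p.1)); split.
- by move=> p; rewrite addr_gt0 // exprn_gt0.
- by move=> x y; rewrite addrC.
- under eq_esum do rewrite EFinD.
  rewrite esumD //; apply: lte_add_pinfty.
    exact: esum_geometric_inj_lt_pinfty (pcan_inj pickleK).
  apply: esum_geometric_inj_lt_pinfty => //.
  by move=> [a b] [a' b'] /(pcan_inj pickleK) [-> ->].
Qed.

Section walks.
Variables (T : Type) (R : numDomainType) (e : rel T) (F : T -> R) (q : T -> T -> R).
Hypothesis F_q_lipschitz : forall u v, e u v -> `|F u - F v| <= q u v.

Fixpoint qlen (x : T) (p : seq T) : R :=
  if p is y :: p' then q x y + qlen y p' else 0.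

Lemma ler_dist_path x p : path e x p -> `|F x - F (last x p)| <= qlen x p.
Proof.
elim: p x => [|y p IH] x /=; first by rewrite subrr normr0.
move=> /andP[exy ep]; apply: le_trans (ler_distD (F y) _ _) _.
by apply: lerD; [exact: F_q_lipschitz | exact: IH].
Qed.

Lemma ler_dist_walk (g : nat -> T) m : (forall n, e (g n) (g n.+1)) ->
  `|F (g 0%N) - F (g m)| <= \sum_(0 <= n < m) q (g n) (g n.+1).
Proof.
move=> eg; elim: m => [|m IH]; first by rewrite subrr normr0 big_nil.
rewrite big_nat_recr //=; apply: le_trans (ler_distD (F (g m)) _ _) _.
by apply: lerD; [exact: IH | exact: F_q_lipschitz].
Qed.

End walks.

Lemma ler_norm_sqrtr_div (R : rcfType) (c s x : R) :
  0 < c -> c * x ^+ 2 <= s -> `|x| <= Num.sqrt (s / c).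
Proof.
move=> c_gt0 cx_le.
have s_ge0 : 0 <= s := le_trans (mulr_ge0 (ltW c_gt0) (sqr_ge0 x)) cx_le.
rewrite -sqrtr_sqr ler_sqrt ?divr_ge0 ?(ltW c_gt0) //.
by rewrite ler_pdivlMr // mulrC.
Qed.

Lemma unbounded_of_not_cvg0 (R : realType) (a : nat -> R) (u : nat -> nat -> R) :
  ~ (a @ \oo --> 0) -> (forall k, \forall n \near \oo, u k n = 2 ^+ k * a n) ->
  forall M, exists k m, M <= `|u k m|.
Proof.
move=> a_not0 u_a M; apply: contra_notP a_not0 => u_bounded.
have u_lt k m : `|u k m| < M.
  by rewrite ltNge; apply/negP => Mu; apply: u_bounded; exists k, m.
apply/cvgrPdist_lt => e e_gt0.
have [k Mk] : exists k, M / e <= 2 ^+ k.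
  have [M_le0|M_gt0] := lerP (M / e) 0; first by exists 0%N; rewrite (le_trans M_le0).
  exists (Num.bound (M / e)); apply: ltW; apply: lt_le_trans (archi_boundP (ltW M_gt0)) _.
  by rewrite -natrX ler_nat ltnW // ltn_expl.
near=> n; rewrite sub0r normrN.
have := u_lt k n; rewrite (near (u_a k) n) // normrM gtr0_norm ?exprn_gt0 // => ua_lt.
rewrite -(ltr_pM2l (exprn_gt0 k (ltr0Sn R 1))); apply: lt_le_trans ua_lt _.
by rewrite -ler_pdivrMr // mulrC.
Unshelve. all: by end_near.
Qed.

Section network.
Variables (R : realType) (V : countType) (nb : V -> seq V) (C : V -> V -> R).
Hypothesis adjC : forall u v, adj nb u v -> adj nb v u.
Hypothesis C_cond : conductances nb C.

Definition edge_energy (F : V -> R) : \bar R :=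
  \esum_(p in edges nb) (C p.1 p.2 * (F p.1 - F p.2) ^+ 2)%:E.

Lemma energyE F : energy nb C F = (2^-1%:E * edge_energy F)%E.
Proof. by []. Qed.

Lemma edge_term_ge0 F p : edges nb p -> 0 <= C p.1 p.2 * (F p.1 - F p.2) ^+ 2.
Proof. by move=> /C_cond[C_gt0 _]; rewrite mulr_ge0 ?sqr_ge0 // ltW. Qed.

Lemma edge_energy_ge0 F : (0 <= edge_energy F)%E.
Proof. by apply: esum_ge0 => p /(edge_term_ge0 F); rewrite lee_fin. Qed.

Lemma edge_energyZ (a : R) F :
  edge_energy (fun v => a * F v) = ((a ^+ 2)%:E * edge_energy F)%E.
Proof.
rewrite -esumZl ?sqr_ge0 //; last by move=> p /(edge_term_ge0 F); rewrite lee_fin.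
by apply: eq_esum => p _; rewrite -EFinM -mulrBr exprMn mulrCA.
Qed.

Lemma exists_dominating_metric (F : nat -> V -> R) :
  (\sum_(k <oo) edge_energy (F k) < +oo)%E ->
  exists q : V -> V -> R,
    [/\ forall u v, adj nb u v -> 0 < q u v,
        forall u v, q u v = q v u,
        (\esum_(p in edges nb) (C p.1 p.2 * q p.1 p.2 ^+ 2)%:E < +oo)%E &
        forall k u v, adj nb u v -> `|F k u - F k v| <= q u v].
Proof.
move=> F_fin.
pose S p := (\sum_(k <oo) (C p.1 p.2 * (F k p.1 - F k p.2) ^+ 2)%:E)%E.
have S_ge0 p : edges nb p -> (0 <= S p)%E.
  by move=> ep; apply: nneseries_ge0 => k _ _; rewrite lee_fin edge_term_ge0.
have S_fin : (\esum_(p in edges nb) S p < +oo)%E.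
  by rewrite esum_nneseries // => p k /(edge_term_ge0 (F k)); rewrite lee_fin.
have S_fin_num p : edges nb p -> S p \is a fin_num.
  by move=> ep; apply: esum_fin_num_term S_fin ep.
have S_sym u v : adj nb u v -> S (u, v) = S (v, u).
  move=> uv; apply: eq_eseriesr => k _; congr (_%:E).
  by rewrite /= (C_cond uv).2 -sqrrN opprB.
have term_le_S k p : edges nb p ->
    C p.1 p.2 * (F k p.1 - F k p.2) ^+ 2 <= fine (S p).
  move=> ep; rewrite -lee_fin fineK ?S_fin_num //.
  apply: le_trans (nneseries_lim_ge (m := 0%N) k.+1 _); last first.
    by move=> n _ _; rewrite lee_fin edge_term_ge0.
  by rewrite big_nat_recr //= leeDr // sume_ge0 // => n _; rewrite lee_fin edge_term_ge0.
have [W [W_gt0 W_sym W_fin]] := exists_summable_sym_weight R (edges nb).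
(* [C q^2 = S + W] on edges: [S] dominates each [C (dF_k)^2] and [W] makes [q] positive. *)
pose q u v := if adj nb u v then Num.sqrt ((fine (S (u, v)) + W (u, v)) / C u v) else 1.
have Cq2 p : edges nb p -> C p.1 p.2 * q p.1 p.2 ^+ 2 = fine (S p) + W p.
  case: p => u v uv; have C_gt0 := (C_cond uv).1.
  rewrite /q uv sqr_sqrtr; first by rewrite mulrC divfK ?gt_eqF.
  by rewrite divr_ge0 ?addr_ge0 ?fine_ge0 ?S_ge0 // ltW.
exists q; split.
- move=> u v uv; rewrite /q uv sqrtr_gt0 divr_gt0 ?(C_cond uv).1 //.
  by rewrite ltr_wpDl ?fine_ge0 ?S_ge0.
- move=> u v; rewrite /q; case: (boolP (adj nb u v)) => [uv|nuv].
    by rewrite (adjC uv) S_sym // (C_cond uv).2 W_sym.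
  by case: (boolP (adj nb v u)) => // /adjC vu; rewrite vu in nuv.
- rewrite (eq_esum (b := fun p => S p + (W p)%:E)%E); last first.
    by move=> p ep; rewrite Cq2 // EFinD fineK ?S_fin_num.
  by rewrite esumD ?lte_add_pinfty // => p _; rewrite lee_fin ltW.
- move=> k u v uv; have C_gt0 := (C_cond uv).1.
  rewrite /q uv; apply: ler_norm_sqrtr_div => //.
  by apply: le_trans (term_le_S k (u, v) uv) _; rewrite lerDl ltW.
Qed.

Lemma null_family_unbounded (F : nat -> V -> R) (b : V) (B : R) (P : set (nat -> V)) :
  (\sum_(k <oo) edge_energy (F k) < +oo)%E ->
  (forall k, `|F k b| <= B) ->
  (forall g, P g -> [/\ graph_path nb g,
     exists p, path (adj nb) (g 0%N) p /\ last (g 0%N) p = b &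
     forall M, exists k m, M <= `|F k (g m)|]) ->
  null_family nb C P.
Proof.
move=> F_fin F_b P_unbounded.
have [q [q_gt0 q_sym q_fin F_q]] := exists_dominating_metric F_fin.
exists q; split => // g /P_unbounded[g_path [p [p_path p_last]] g_unbounded].
have q_ge0 n : (0 <= (q (g n) (g n.+1))%:E)%E by rewrite lee_fin ltW ?q_gt0.
apply: eq_infty => M.
have [k [m Fgm]] := g_unbounded (M + B + qlen q (g 0%N) p).
apply: le_trans (nneseries_lim_ge (m := 0%N) m (fun n _ _ => q_ge0 n)).
rewrite sumEFin lee_fin.
have walk := ler_dist_walk (F_q k) m g_path.
have to_b := ler_dist_path (F_q k) p_path; rewrite p_last in to_b.
have := lerB_dist (F k (g m)) (F k (g 0%N)); rewrite distrC.
have := lerB_dist (F k (g 0%N)) (F k b).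
have := F_b k; lra.
Qed.

End network.

Section packing.
Variables (R : realType) (V : countType) (nb : V -> seq V) (c : V -> R * R) (r : V -> R).

Lemma eucl_distC (p q : R * R) : eucl_dist p q = eucl_dist q p.
Proof. by rewrite /eucl_dist -sqrrN opprB -[(p.2 - q.2) ^+ 2]sqrrN opprB. Qed.

Lemma circle_packing_adjC : circle_packing nb c r -> forall u v, adj nb u v -> adj nb v u.
Proof.
case=> _ _ _ adjE _ u v /adjE[uv d]; apply/adjE.
by rewrite eq_sym eucl_distC d addrC.
Qed.

Hypothesis r_ge0 : forall v, 0 <= r v.

Lemma wlen_ge0 x p : 0 <= wlen r x p.
Proof. by elim: p x => [|y p IH] x //=; rewrite !addr_ge0. Qed.

Lemma dm_self_le0 u : dm nb r u u <= 0.
Proof.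
apply: ge_inf; last by exists [::].
by exists 0 => _ [p [_ _ ->]]; exact: wlen_ge0.
Qed.

Lemma in_T_eventually_zero (C : V -> V -> R) A g z (s : nat -> V) :
  in_T nb c r C A g -> A z -> dm_conv_to nb c r s z -> \forall n \near \oo, g (s n) = 0.
Proof.
move=> [_ g_far] Az s_z; have [e e_gt0 [N g_far_s]] := g_far z Az s s_z.
exists N => // n /= Nn; apply/eqP; apply: contraT => gsn_neq0.
by have := le_trans (g_far_s n Nn (s n) gsn_neq0) (dm_self_le0 (s n)); rewrite leNgt e_gt0.
Qed.

End packing.

Lemma three_connected_walk (V : countType) (nb : V -> seq V) x y v :
  three_connected nb -> adj nb x y -> x != y ->
  exists p, path (adj nb) x p /\ last x p = v.
Proof.
move=> conn3 xy x_neq_y; have [<-|v_neq_y] := eqVneq y v; last rewrite eq_sym in v_neq_y.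
  by exists [:: y]; rewrite /= xy.
have [p [xp pv _]] := conn3 y y x v x_neq_y x_neq_y v_neq_y v_neq_y.
by exists p.
Qed.

Lemma in_closure_T_approx (R : realType) (V : countType) (nb : V -> seq V)
    (c : V -> R * R) (r : V -> R) (C : V -> V -> R) (b0 : V) A (f : V -> R) :
  conductances nb C -> in_closure_T nb c r C b0 A f ->
  exists g : nat -> V -> R, forall k, [/\ in_T nb c r C A (g k),
    (edge_energy nb C (fun v => (2 ^+ k * (f v - g k v))%R) <= (2 * 4^-1 ^+ k)%:E)%E &
    `|2 ^+ k * (f b0 - g k b0)| <= 1].
Proof.
move=> C_cond f_clos.
have e_gt0 k : (0 : R) < 4^-1 ^+ k by rewrite exprn_gt0 // invr_gt0.
have /choice[g g_close] k : exists g, in_T nb c r C A g /\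
    (energy nb C (fun v => (f v - g v)%R) + ((f b0 - g b0) ^+ 2)%:E
       < ((4^-1 ^+ k) ^+ 2)%:E)%E.
  by have [g gT g_close] := f_clos _ (e_gt0 k); exists g.
exists g => k; have [gT g_closek] := g_close k; have e_gt0k := e_gt0 k.
set e := 4^-1 ^+ k in g_closek e_gt0k *; set h := fun v => (f v - g k v)%R in g_closek *.
have two_k_e : (2 ^+ k) ^+ 2 * e = 1.
  by rewrite exprAC (_ : 2 ^+ 2 = 4) ?expr2 -?natrM // /e -exprMn divff ?expr1n.
have energy_ge0 : (0 <= energy nb C h)%E.
  by rewrite energyE mule_ge0 ?lee_fin ?invr_ge0 // edge_energy_ge0.
have energy_le : (energy nb C h <= (e ^+ 2)%:E)%E.
  by apply/ltW/(le_lt_trans _ g_closek); rewrite leeDl // lee_fin sqr_ge0.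
have hb0_lt : h b0 ^+ 2 < e ^+ 2.
  by rewrite -lte_fin; apply: le_lt_trans g_closek; rewrite leeDr.
have two_k_ge1 : 1 <= 2 ^+ k :> R by rewrite exprn_ege1 // ler1n.
split => //.
- rewrite (edge_energyZ C_cond _ h).
  have -> : edge_energy nb C h = (2%:E * energy nb C h)%E.
    by rewrite energyE muleA -EFinM divff // mul1e.
  rewrite muleA -EFinM.
  apply: le_trans (lee_wpmul2l _ energy_le) _; first by rewrite lee_fin mulr_ge0 // sqr_ge0.
  rewrite -EFinM lee_fin; set L := (2 ^+ k) ^+ 2 in two_k_e *; nra.
- rewrite normrM ger0_norm ?exprn_ge0 //.
  have : `|h b0| < e by rewrite ltr_norml; apply/andP; split; nra.
  nra.
Qed.

Theorem corollary3p10 (R : realType) (V : countType) (nb : V -> seq V)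
  (c : V -> R * R) (r : V -> R) (C : V -> V -> R) (b0 : V)
  (A : set (R * R)) (f : V -> R) :
  packed_in_H2 nb c r ->
  three_connected nb ->
  bounded_degree nb ->
  locally_finite_dual c r ->
  conductances nb C ->
  transient nb C ->
  A !=set0 -> A `<` (@unit_circle R) -> closed A ->
  net_harmonic nb C f -> dirichlet nb C f -> in_closure_T nb c r C b0 A f ->
  null_family nb C
    [set g | graph_path nb g /\ (exists2 z, A z & dm_conv_to nb c r g z) /\
             ~ ((fun n => f (g n)) @ \oo --> (0 : R))].
Proof.
move=> [packing _] conn3 _ _ C_cond _ _ _ _ _ _ f_clos.
have [r_gt0 _ _ adjE _] := packing.
have [g g_approx] := in_closure_T_approx C_cond f_clos.
pose F k v := 2 ^+ k * (f v - g k v).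
apply: (null_family_unbounded (circle_packing_adjC packing) C_cond (F := F) (b := b0) (B := 1)).
- have quarter_gt0 : (0 : R) < 4^-1 by rewrite invr_gt0.
  have quarter_lt1 : (4^-1 : R) < 1 by rewrite invf_lt1 // ltr1n.
  apply: le_lt_trans (nneseries_geometric_lt_pinfty (a := 2) _ quarter_gt0 quarter_lt1) => //.
  apply: lee_nneseries => [k _ _|k _]; first exact: edge_energy_ge0.
  by have [] := g_approx k.
- by move=> k; have [] := g_approx k.
- move=> s [s_path [[z Az s_z] s_not0]]; split => //.
    by apply: three_connected_walk conn3 (s_path 0%N) _; have [] := (adjE _ _).1 (s_path 0%N).
  apply: (@unbounded_of_not_cvg0 _ _ (fun k n => F k (s n)) s_not0) => k.
  have [gT _ _] := g_approx k.
  apply: filterS (in_T_eventually_zero (fun v => ltW (r_gt0 v)) gT Az s_z).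
  by move=> n gsn0; rewrite /F gsn0 subr0.
Qed.
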